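(* Let $C\in\mathbb{R}^{p\times p}$ be positive definite, $w\in\mathbb{R}^p$, $\mu>0$. For $\tau>0$ let $\hat u_\tau\in(-\mu,\mu)^p$ be the unique real solution of $(\mu^2-u_j^2)[C^{-1}(w-u)]_j-u_j/\tau=0$, let $D_\tau$ be the diagonal matrix with $(D_\tau)_{jj}=\tau(\mu^2-\hat u_{\tau,j}^2)^2/(\mu^2+\hat u_{\tau,j}^2)$, and let $$E_\tau=\tau D_\tau(C+D_\tau)^{-1}C=\frac\tau2\bigl[D_\tau(C+D_\tau)^{-1}C+C(C+D_\tau)^{-1}D_\tau\bigr].$$ With $\hat u=\lim_{\tau\to\infty}\hat u_\tau$, $\hat x=C^{-1}(w-\hat u)$, $I=\{j:\hat x_j\neq0\}$ and $I^c=\{1,\dots,p\}\setminus I$, assume there are no transition coordinates, i.e. $|\hat u_j|<\mu$ for all $j\in I^c$. Then as $\tau\to\infty$, $$(E_\tau)_{ij}=\begin{cases}O(\tau) & i,j\in I^c,\\ O(1) & \text{otherwise.}\end{cases}$$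
   Context: Standing facts: $\hat u_\tau\to\hat u$, where $\hat u$ is the unique minimizer of $(w-u)^TC^{-1}(w-u)$ over $\{|u_j|\le\mu\ \forall j\}$, and $\hat x=C^{-1}(w-\hat u)$ is the unique minimizer of $H(x)=x^TCx-2w^Tx+2\mu\|x\|_1$; also $\hat x_\tau:=C^{-1}(w-\hat u_\tau)\to\hat x$. For $j\in I$ one has $|\hat u_j|=\mu$. *)

From HB Require Import structures.
From mathcomp Require Import all_boot all_order all_algebra.
Set Implicit Arguments. Unset Strict Implicit. Unset Printing Implicit Defensive.
Import Order.TTheory GRing.Theory Num.Theory.
Local Open Scope ring_scope.

Definition posdef (R : realFieldType) (p : nat) (C : 'M[R]_p) : Prop :=
  C^T = C /\ forall v : 'cV[R]_p, v != 0 -> 0 < (v^T *m C *m v) 0 0.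

Definition xvec (R : realFieldType) (p : nat) (C : 'M[R]_p) (w u : 'cV[R]_p)
  : 'cV[R]_p := invmx C *m (w - u).

Definition solves_eq (R : realFieldType) (p : nat) (C : 'M[R]_p) (w : 'cV[R]_p)
  (mu tau : R) (u : 'cV[R]_p) : Prop :=
  forall j : 'I_p, `|u j 0| < mu /\
    (mu ^+ 2 - u j 0 ^+ 2) * xvec C w u j 0 - u j 0 / tau = 0.

Definition Dmat (R : realFieldType) (p : nat) (mu tau : R) (u : 'cV[R]_p)
  : 'M[R]_p :=
  diag_mx (\row_j (tau * (mu ^+ 2 - u j 0 ^+ 2) ^+ 2 / (mu ^+ 2 + u j 0 ^+ 2))).

Definition Emat (R : realFieldType) (p : nat) (C : 'M[R]_p) (mu tau : R)
  (u : 'cV[R]_p) : 'M[R]_p :=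
  let D := Dmat mu tau u in tau *: (D *m invmx (C + D) *m C).

Definition conv_infty (R : realFieldType) (p : nat) (u : R -> 'cV[R]_p)
  (uhat : 'cV[R]_p) : Prop :=
  forall eps : R, 0 < eps -> exists T : R, forall tau : R, T <= tau ->
    forall j : 'I_p, `|u tau j 0 - uhat j 0| < eps.

From HB Require Import structures.
From mathcomp Require Import all_boot all_order all_algebra.
From mathcomp Require Import ring lra.
Import Order.TTheory GRing.Theory Num.Theory.
Set Implicit Arguments. Unset Strict Implicit. Unset Printing Implicit Defensive.
Local Open Scope ring_scope.

(** Since [D_tau] is diagonal and nonnegative, [C + D_tau >= C] in the
   Loewner order; together with Cauchy-Schwarz for the inner product of [C]
   this bounds every entry of [(C + D_tau)^-1] by a constant depending on [C]
   only.  Writing [D (C + D)^-1 C = C - C (C + D)^-1 C = C (C + D)^-1 D],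
   every entry of [E_tau] is [O(tau)], and entry [(i, j)] is also
   [O(tau (D_tau)_kk)] for [k = i] and for [k = j].  For [k] in [I] the
   defining equation gives [tau (mu^2 - u_k^2) x_k = u_k], hence
   [tau (D_tau)_kk <= 1 / x_k^2], which stays bounded because [x_tau -> xhat]
   and [xhat_k != 0]. *)

Section L1Norm.
Variable R : realFieldType.

Lemma ler_term_sum (I : finType) (F : I -> R) k :
  (forall i, 0 <= F i) -> F k <= \sum_i F i.
Proof. by move=> F0; rewrite (bigD1 k) //= lerDl sumr_ge0. Qed.

Definition l1norm m n (M : 'M[R]_(m, n)) : R := \sum_i \sum_j `|M i j|.

Lemma l1norm_ge0 m n (M : 'M[R]_(m, n)) : 0 <= l1norm M.
Proof. by apply: sumr_ge0 => i _; apply: sumr_ge0. Qed.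

Lemma row_sum_le_l1norm m n (M : 'M[R]_(m, n)) i : \sum_j `|M i j| <= l1norm M.
Proof. by apply: ler_term_sum => k; apply: sumr_ge0. Qed.

Lemma entry_le_l1norm m n (M : 'M[R]_(m, n)) i j : `|M i j| <= l1norm M.
Proof.
apply: le_trans (row_sum_le_l1norm M i).
exact: ler_term_sum j (fun k => normr_ge0 (M i k)).
Qed.

Lemma l1norm_mulmx m n q (M : 'M[R]_(m, n)) (N : 'M[R]_(n, q)) :
  l1norm (M *m N) <= l1norm M * l1norm N.
Proof.
rewrite /l1norm mulr_suml; apply: ler_sum => i _.
apply: (@le_trans _ _ (\sum_j \sum_k `|M i k| * `|N k j|)).
  apply: ler_sum => j _; rewrite mxE; apply: le_trans (ler_norm_sum _ _ _) _.
  by apply: ler_sum => k _; rewrite normrM.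
rewrite exchange_big /= mulr_suml; apply: ler_sum => k _.
by rewrite -mulr_sumr ler_wpM2l ?row_sum_le_l1norm.
Qed.

End L1Norm.

Section PositiveDefinite.
Variables (R : realFieldType) (p : nat).
Implicit Types (A C : 'M[R]_p) (d : 'rV[R]_p) (x y : 'cV[R]_p).

Definition mxform A x y : R := (x^T *m A *m y) 0 0.

Lemma mxformDl A C x y : mxform (A + C) x y = mxform A x y + mxform C x y.
Proof. by rewrite /mxform mulmxDr mulmxDl mxE. Qed.

Lemma mxform_sym A x y : A^T = A -> mxform A x y = mxform A y x.
Proof.
move=> sA; rewrite /mxform -[in LHS](trmxK (x^T *m A *m y)) [in LHS]mxE.
by rewrite !trmx_mul trmxK sA mulmxA.
Qed.

Lemma mxform_shift A x y s : A^T = A ->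
  mxform A (y + s *: x) (y + s *: x)
  = mxform A y y + 2 * s * mxform A x y + s ^+ 2 * mxform A x x.
Proof.
move=> sA; rewrite [RHS](_ : _ = mxform A y y + s * mxform A y x
    + s * mxform A x y + s * s * mxform A x x); last first.
  by rewrite [mxform A y x]mxform_sym //; ring.
rewrite /mxform !raddfD /= !linearZ /= !mulmxDl -!scalemxAl !mxE.
by ring.
Qed.

Lemma posdef_mxform_gt0 A x : posdef A -> x != 0 -> 0 < mxform A x x.
Proof. by case=> _; apply. Qed.

Lemma posdef_mxform_ge0 A x : posdef A -> 0 <= mxform A x x.
Proof.
move=> pA; have [->|x0] := eqVneq x 0; last exact/ltW/posdef_mxform_gt0.
by rewrite /mxform trmx0 !mul0mx mxE.
Qed.

Lemma posdef_unitmx A : posdef A -> A \in unitmx.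
Proof.
move=> pA; rewrite -row_free_unit; apply/negPn/negP => nfA.
have [i ki0] : exists i, row i (kermx A) != 0.
  apply/existsP; rewrite -negb_forall; move: nfA; rewrite -kermx_eq0.
  apply: contra => /forallP k0.
  by apply/eqP/row_matrixP => i; rewrite row0; apply/eqP.
have := posdef_mxform_gt0 pA (_ : (row i (kermx A))^T != 0).
rewrite trmx_eq0 /mxform trmxK -row_mul mulmx_ker row0 mul0mx mxE ltxx.
by move/(_ ki0).
Qed.

Lemma posdef_mxform_CauchySchwarz A x y : posdef A ->
  mxform A x y ^+ 2 <= mxform A x x * mxform A y y.
Proof.
move=> pA; have [->|x0] := eqVneq x 0.
  by rewrite /mxform trmx0 !mul0mx !mxE expr0n /= mul0r.
have xx0 := posdef_mxform_gt0 pA x0.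
set t := mxform A x y / mxform A x x.
have := posdef_mxform_ge0 (y + (- t) *: x) pA.
rewrite mxform_shift; last by case: pA.
rewrite [X in 0 <= X](_ : _ = mxform A y y - mxform A x y ^+ 2 / mxform A x x).
  by rewrite subr_ge0 ler_pdivrMr // mulrC.
by rewrite /t; field; rewrite gt_eqF.
Qed.

Lemma diag_mxform_ge0 d y : (forall i, 0 <= d 0 i) -> 0 <= mxform (diag_mx d) y y.
Proof.
move=> d0; rewrite /mxform mul_mx_diag mxE; apply: sumr_ge0 => j _.
by rewrite !mxE mulrAC -expr2 mulr_ge0 ?sqr_ge0.
Qed.

Lemma posdef_add_diag C d : posdef C -> (forall i, 0 <= d 0 i) ->
  posdef (C + diag_mx d).
Proof.
move=> pC d0; split; first by rewrite linearD /= tr_diag_mx; case: pC => -> _.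
move=> v v0; rewrite -[_ 0 0]/(mxform _ v v) mxformDl ltr_wpDr ?diag_mxform_ge0 //.
exact: posdef_mxform_gt0.
Qed.

Lemma mxform_invmx_delta C k y : posdef C ->
  mxform C (invmx C *m delta_mx k 0) y = y k 0.
Proof.
case=> sC pC; have uC : C \in unitmx by apply: posdef_unitmx.
rewrite /mxform trmx_mul trmx_inv sC trmx_delta -(mulmxA _ (invmx C)) mulVmx //.
by rewrite mulmx1 -rowE mxE.
Qed.

Lemma invmx_add_diag_entry_le C d k j : posdef C -> (forall i, 0 <= d 0 i) ->
  `|invmx (C + diag_mx d) k j| <= \sum_i `|invmx C i i|.
Proof.
move=> pC d0; have pA := posdef_add_diag pC d0.
set A := C + diag_mx d; set B := invmx C.
set y := invmx A *m delta_mx j (0 : 'I_1).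
have yE l : y l 0 = invmx A l j by rewrite /y -colE mxE.
have yAy : mxform A y y = y j 0.
  rewrite /mxform -mulmxA {2}/y (mulmxA A) mulmxV ?posdef_unitmx //.
  by rewrite mul1mx -colE !mxE.
have yCy : mxform C y y <= y j 0.
  by rewrite -yAy /A mxformDl lerDl diag_mxform_ge0.
have B0 l : 0 <= B l l.
  have := posdef_mxform_ge0 (invmx C *m delta_mx l 0) pC.
  by rewrite mxform_invmx_delta // -colE mxE.
have yB l : y l 0 ^+ 2 <= B l l * y j 0.
  have := posdef_mxform_CauchySchwarz (invmx C *m delta_mx l 0) y pC.
  rewrite !mxform_invmx_delta // -colE mxE => /le_trans; apply.
  by rewrite mxE ler_wpM2l.
have yjB : y j 0 <= B j j by have := yB j; have := B0 j; nra.
have BS l : B l l <= \sum_i `|B i i|.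
  exact: le_trans (ler_norm _) (ler_term_sum l (fun i => normr_ge0 (B i i))).
have := yB k; have := BS k; have := BS j; have := B0 k; have := B0 j.
by rewrite -yE ler_norml => *; apply/andP; split; nra.
Qed.

Lemma l1norm_invmx_add_diag_le C d : posdef C -> (forall i, 0 <= d 0 i) ->
  l1norm (invmx (C + diag_mx d)) <= (\sum_i `|invmx C i i|) *+ p *+ p.
Proof.
move=> pC d0.
apply: (@le_trans _ _ (\sum_(k < p) \sum_(l < p) \sum_i `|invmx C i i|)).
  by do 2!apply: ler_sum => ? _; apply: invmx_add_diag_entry_le.
by rewrite !sumr_const !card_ord.
Qed.

End PositiveDefinite.

Lemma mulmx_invmx_addl (R : comUnitRingType) p (C D : 'M[R]_p) :
  C + D \in unitmx -> D *m invmx (C + D) *m C = C - C *m invmx (C + D) *m C.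
Proof.
move=> uCD; set A := C + D; have -> : D = A - C by rewrite /A addrC addKr.
by rewrite !mulmxBl mulmxV // mul1mx.
Qed.

Lemma mulmx_invmx_addr (R : comUnitRingType) p (C D : 'M[R]_p) :
  C + D \in unitmx -> C *m invmx (C + D) *m D = C - C *m invmx (C + D) *m C.
Proof.
move=> uCD; set A := C + D; have -> : D = A - C by rewrite /A addrC addKr.
by rewrite -mulmxA !mulmxBr mulVmx // mulmx1 mulmxA.
Qed.

Section EntryBounds.
Variables (R : realFieldType) (p : nat).

Definition Dweights (mu tau : R) (u : 'cV[R]_p) : 'rV[R]_p :=
  \row_j (tau * (mu ^+ 2 - u j 0 ^+ 2) ^+ 2 / (mu ^+ 2 + u j 0 ^+ 2)).

Definition Emx (C : 'M[R]_p) (tau : R) (d : 'rV[R]_p) : 'M[R]_p :=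
  tau *: (diag_mx d *m invmx (C + diag_mx d) *m C).

Lemma Emat_Emx C mu tau u : Emat C mu tau u = Emx C tau (Dweights mu tau u).
Proof. by []. Qed.

Lemma Dweights_ge0 mu tau u : 0 <= tau -> forall j, 0 <= Dweights mu tau u 0 j.
Proof.
move=> tau0 j; rewrite mxE; apply: divr_ge0; last by rewrite addr_ge0 ?sqr_ge0.
by rewrite mulr_ge0 ?sqr_ge0.
Qed.

Variables (C : 'M[R]_p) (d : 'rV[R]_p) (tau N : R).
Hypotheses (uCD : C + diag_mx d \in unitmx) (tau0 : 0 <= tau)
  (normN : l1norm (invmx (C + diag_mx d)) <= N).

Lemma Emx_entry_le i j :
  `|Emx C tau d i j| <= tau * (l1norm C + l1norm C * N * l1norm C).
Proof.
rewrite /Emx mulmx_invmx_addl // mxE normrM ger0_norm // ler_wpM2l //.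
rewrite mxE [X in _ + X]mxE.
apply: le_trans (ler_normB _ _) (lerD (entry_le_l1norm _ _ _) _).
apply: le_trans (entry_le_l1norm _ i j) _; apply: le_trans (l1norm_mulmx _ _) _.
rewrite ler_wpM2r ?l1norm_ge0 //; apply: le_trans (l1norm_mulmx _ _) _.
by rewrite ler_wpM2l ?l1norm_ge0.
Qed.

Lemma Emx_entry_le_row i j : 0 <= d 0 i ->
  `|Emx C tau d i j| <= tau * d 0 i * (N * l1norm C).
Proof.
move=> di0; rewrite /Emx -mulmxA mxE mul_diag_mx mxE mulrA normrM.
rewrite ger0_norm ?mulr_ge0 // ler_wpM2l ?mulr_ge0 //.
apply: le_trans (entry_le_l1norm _ i j) _; apply: le_trans (l1norm_mulmx _ _) _.
by rewrite ler_wpM2r ?l1norm_ge0.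
Qed.

Lemma Emx_entry_le_col i j : 0 <= d 0 j ->
  `|Emx C tau d i j| <= tau * d 0 j * (N * l1norm C).
Proof.
move=> dj0; rewrite /Emx mulmx_invmx_addl // -mulmx_invmx_addr //.
rewrite mxE mul_mx_diag mxE mulrCA mulrC normrM ger0_norm ?mulr_ge0 //.
rewrite ler_wpM2l ?mulr_ge0 // [N * _]mulrC.
apply: le_trans (entry_le_l1norm _ i j) _; apply: le_trans (l1norm_mulmx _ _) _.
by rewrite ler_wpM2l ?l1norm_ge0.
Qed.

End EntryBounds.

Section Asymptotics.
Variable R : realFieldType.

Lemma eventually_forall_ord n (P : 'I_n -> R -> Prop) :
  (forall i, exists T, forall t, T <= t -> P i t) ->
  exists T, forall t, T <= t -> forall i, P i t.
Proof.
move=> /fin_all_exists[Tf hTf]; exists (\sum_i `|Tf i|) => t Tt i.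
apply: hTf; apply: le_trans Tt; apply: le_trans (ler_norm _) _.
exact: ler_term_sum.
Qed.

Lemma sqr_le_4sqr_of_near (x y : R) : `|x - y| <= `|y| / 2 -> y ^+ 2 <= 4 * x ^+ 2.
Proof.
move=> near; have := ler_normB x (x - y); rewrite subKr => tri.
rewrite -(real_normK (num_real y)) -(real_normK (num_real x)).
have := normr_ge0 x; have := normr_ge0 y; nra.
Qed.

Lemma Dweight_scaled_le (mu tau a x : R) : 0 < mu -> 0 < tau -> x != 0 ->
  (mu ^+ 2 - a ^+ 2) * x - a / tau = 0 ->
  tau * (tau * (mu ^+ 2 - a ^+ 2) ^+ 2 / (mu ^+ 2 + a ^+ 2)) <= (x ^+ 2)^-1.
Proof.
move=> mu0 tau0 x0 /eqP; rewrite subr_eq0 => /eqP eq_a.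
have tbx : tau * (mu ^+ 2 - a ^+ 2) * x = a.
  by rewrite -mulrA eq_a mulrC divfK // gt_eqF.
have m0 : 0 < mu ^+ 2 + a ^+ 2 by apply: ltr_pwDl; rewrite ?exprn_gt0 ?sqr_ge0.
have x20 : 0 < x ^+ 2 by rewrite exprn_even_gt0.
rewrite [X in X <= _](_ : _ = (tau * (mu ^+ 2 - a ^+ 2)) ^+ 2 / (mu ^+ 2 + a ^+ 2)).
  rewrite ler_pdivrMr // ler_pdivlMl // -exprMn mulrC tbx lerDr; exact: sqr_ge0.
by rewrite exprMn; ring.
Qed.

Variables (p : nat) (C : 'M[R]_p) (w : 'cV[R]_p).

Lemma xvec_dist_le (u v : 'cV[R]_p) e k : 0 <= e ->
  (forall l, `|u l 0 - v l 0| <= e) ->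
  `|xvec C w u k 0 - xvec C w v k 0| <= l1norm (invmx C) * e.
Proof.
move=> e0 uv; rewrite /xvec.
rewrite (_ : _ - _ = (invmx C *m (w - u) - invmx C *m (w - v)) k 0).
  2: by rewrite !mxE.
rewrite -mulmxBr opprB addrC addrA subrK mxE.
apply: le_trans (ler_norm_sum _ _ _) _.
apply: (@le_trans _ _ (\sum_l `|invmx C k l| * e)).
  by apply: ler_sum => l _; rewrite !mxE normrM distrC ler_wpM2l.
by rewrite -mulr_suml ler_wpM2r ?row_sum_le_l1norm.
Qed.

Lemma conv_infty_xvec_near (u : R -> 'cV[R]_p) uhat : conv_infty u uhat ->
  exists T, forall tau, T <= tau -> forall k, xvec C w uhat k 0 != 0 ->
    `|xvec C w (u tau) k 0 - xvec C w uhat k 0| <= `|xvec C w uhat k 0| / 2.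
Proof.
move=> cvu; apply: eventually_forall_ord => k.
set xh := xvec C w uhat k 0; set S := l1norm (invmx C).
have [xh0|xk] := eqVneq xh 0; first by exists 0.
have S0 : 0 <= S := l1norm_ge0 _.
have e0 : 0 < `|xh| / (2 * (1 + S)).
  by rewrite divr_gt0 ?normr_gt0 ?mulr_gt0 ?ltr_pwDl.
have [T hT] := cvu _ e0; exists T => tau Ttau _.
apply: le_trans (xvec_dist_le _ (ltW e0) (fun l => ltW (hT tau Ttau l))) _.
rewrite -/S mulrCA ler_wpM2l // ler_pdivrMr ?mulr_gt0 ?ltr_pwDl //.
by rewrite mulrA mulVf ?pnatr_eq0 // mul1r lerDr.
Qed.

Lemma Dweights_eventually_le mu (u : R -> 'cV[R]_p) uhat : 0 < mu ->
  (forall tau, 0 < tau -> solves_eq C w mu tau (u tau)) -> conv_infty u uhat ->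
  exists T, forall tau, 0 < tau -> T <= tau ->
    forall k, xvec C w uhat k 0 != 0 ->
    tau * Dweights mu tau (u tau) 0 k <= 4 / xvec C w uhat k 0 ^+ 2.
Proof.
move=> mu0 solu cvu; have [T hT] := conv_infty_xvec_near cvu.
exists T => tau tau0 Ttau k xk.
have xh4x := sqr_le_4sqr_of_near (hT tau Ttau k xk).
have xh20 : 0 < xvec C w uhat k 0 ^+ 2 by rewrite exprn_even_gt0.
have x0 : xvec C w (u tau) k 0 != 0.
  by apply: contraTneq xh4x => ->; rewrite expr0n mulr0 -ltNge.
have [_ eq_u] := solu tau tau0 k.
rewrite mxE; apply: le_trans (Dweight_scaled_le mu0 tau0 x0 eq_u) _.
rewrite -invf_div lef_pV2 ?posrE ?divr_gt0 ?exprn_even_gt0 //.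
by rewrite ler_pdivrMr // mulrC.
Qed.

End Asymptotics.

Theorem proposition1 (R : rcfType) (p : nat) (C : 'M[R]_p) (w : 'cV[R]_p)
  (mu : R) (u : R -> 'cV[R]_p) (uhat : 'cV[R]_p) :
  posdef C -> 0 < mu ->
  (forall tau : R, 0 < tau -> solves_eq C w mu tau (u tau)) ->
  conv_infty u uhat ->
  (* no transition coordinates: |uhat_j| < mu for j in I^c *)
  (forall j : 'I_p, xvec C w uhat j 0 = 0 -> `|uhat j 0| < mu) ->
  exists K T : R, forall tau : R, 0 < tau -> T <= tau ->
    forall i j : 'I_p,
      `|Emat C mu tau (u tau) i j|
        <= K * (if (xvec C w uhat i 0 == 0) && (xvec C w uhat j 0 == 0)
                then tau else 1).
Proof.
(* The upper bounds hold without the no-transition hypothesis. *)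
move=> pC mu0 solu cvu _.
have [T hT] := Dweights_eventually_le mu0 solu cvu.
set xh := xvec C w uhat; set c := l1norm C.
set N := (\sum_i `|invmx C i i|) *+ p *+ p; set delta := \sum_k 4 / xh k 0 ^+ 2.
have c0 : 0 <= c := l1norm_ge0 C.
have N0 : 0 <= N by rewrite !mulrn_wge0 ?sumr_ge0.
have delta0 k : 0 <= 4 / xh k 0 ^+ 2 by rewrite divr_ge0 ?sqr_ge0.
have delta_ge0 : 0 <= delta by apply: sumr_ge0 => k _.
pose K := c + c * N * c + delta * (N * c).
exists K, T => tau tau0 Ttau i j.
set d := Dweights mu tau (u tau); rewrite Emat_Emx -/d.
have d0 := Dweights_ge0 mu (u tau) (ltW tau0).
have uCD := posdef_unitmx (posdef_add_diag pC d0).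
have normN := l1norm_invmx_add_diag_le pC d0.
have I_bound k : xh k 0 != 0 -> tau * d 0 k * (N * c) <= K.
  move=> xk; apply: le_trans (_ : delta * (N * c) <= _); last first.
    by rewrite lerDr addr_ge0 ?mulr_ge0.
  by rewrite ler_wpM2r ?mulr_ge0 // (le_trans (hT _ tau0 Ttau k xk)) ?ler_term_sum.
have [_|xi] := eqVneq (xh i 0) 0; last first.
  rewrite mulr1.
  exact: le_trans (Emx_entry_le_row (ltW tau0) normN _ (d0 i)) (I_bound i xi).
have [_|xj] := eqVneq (xh j 0) 0; last first.
  rewrite andbF mulr1.
  exact: le_trans (Emx_entry_le_col uCD (ltW tau0) normN _ (d0 j)) (I_bound j xj).
rewrite /= mulrC; apply: le_trans (Emx_entry_le uCD (ltW tau0) normN i j) _.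
by rewrite ler_wpM2l ?(ltW tau0) // lerDl !mulr_ge0.
Qed.
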